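(* Let $\{\mathcal{T}_n\}_{n\ge 2}$ be the two-type CMRT with parameters $p\in(0,1]$, $q\in[0,1]$, and for $k\ge 0$ let $N_k(n)$ be the number of vertices of out-degree $k$ in $\mathcal{T}_n$. Then for each fixed $k\ge 0$, $N_k(n)/n\to p_k$ in probability as $n\to\infty$, where $$p_k=\frac{p}{1+r_A^*}\left(\frac{r_A^*}{1+r_A^*}\right)^k+\frac{1-p}{1+r_B^*}\left(\frac{r_B^*}{1+r_B^*}\right)^k,\qquad r_A^*=q+\frac{(1-p)(1-q)}{p},\quad r_B^*=\frac{p(1-q)}{1-p}+q,$$ and when $p=1$ the second term of $p_k$ is interpreted as $0$.
   Context: Two-type Community Modulated Recursive Tree (CMRT) with parameters $p\in(0,1]$, $q\in[0,1]$: $\mathcal{T}_2$ consists of vertex $1$ of type $A$ and vertex $2$ of type $B$ joined by an edge (the roots of type $A$ and $B$). For $n\ge 3$, $\mathcal{T}_n$ is obtained from $\mathcal{T}_{n-1}$ by adding vertex $n$: (1) vertex $n$ is of type $A$ with probability $p$ and of type $B$ with probability $1-p$; (2) with probability $q$ it decides to connect to a vertex of its own type, and with probability $1-q$ to a vertex of the other type; (3) it connects by an edge to an existing vertex of the selected type chosen uniformly at random. All random choices are independent. Edges are viewed as directed from parent (the earlier vertex) to child; the out-degree of a vertex is its number of children. *)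

From HB Require Import structures.
From mathcomp Require Import all_boot all_order all_algebra.
From mathcomp Require Import reals.
Set Implicit Arguments. Unset Strict Implicit. Unset Printing Implicit Defensive.
Import Order.TTheory GRing.Theory Num.Theory.
Local Open Scope ring_scope.

(* A tree T_n is encoded by a sequence s of length n: entry i (0-indexed)
   describes vertex i+1 as (type_is_A, parent).  Vertex 1 = (true, 0)
   (root of type A, no parent), vertex 2 = (false, 1) (root of type B,
   joined to vertex 1, its parent since it is earlier). *)
Definition tree := seq (bool * nat).

Definition T2 : tree := [:: (true, 0%N); (false, 1%N)].

(* type of vertex j (1-indexed): true = A, false = B *)
Definition vtype (s : tree) (j : nat) : bool := (nth (true, 0%N) s j.-1).1.

Definition ntype (s : tree) (t : bool) : nat := count (fun e => e.1 == t) s.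

Section CMRT.
Variables (R : realType) (p q : R).

(* probability that the new vertex gets type t and attaches to existing
   vertex j (1 <= j <= size s): type choice, then own/other-type decision
   (which must select j's type), then uniform choice within that type. *)
Definition step_prob (s : tree) (t : bool) (j : nat) : R :=
  (if t then p else 1 - p) *
  (if vtype s j == t then q else 1 - q) / (ntype s (vtype s j))%:R.

(* Law of the tree after m growth steps (i.e. of T_(m+2)) as a finite
   weighted list of outcomes (histories are all distinct). *)
Fixpoint cmrt_dist (m : nat) : seq (tree * R) :=
  match m with
  | 0 => [:: (T2, 1)]
  | m'.+1 =>
      flatten [seq [seq (rcons x.1 (t, j), x.2 * step_prob x.1 t j)
                   | t <- [:: true; false], j <- iota 1 (size x.1)]
              | x <- cmrt_dist m']
  end.

Definition probT (n : nat) (E : tree -> bool) : R :=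
  \sum_(x <- cmrt_dist (n - 2)) x.2 * (E x.1)%:R.

End CMRT.

Definition outdeg (s : tree) (v : nat) : nat := count (fun e => e.2 == v) s.

Definition Nk (k : nat) (s : tree) : nat :=
  count (fun v => outdeg s v == k) (iota 1 (size s)).

Definition rA {R : realType} (p q : R) : R := q + (1 - p) * (1 - q) / p.
Definition rB {R : realType} (p q : R) : R := p * (1 - q) / (1 - p) + q.

Definition pk {R : realType} (p q : R) (k : nat) : R :=
  p / (1 + rA p q) * (rA p q / (1 + rA p q)) ^+ k +
  (if p == 1 then 0
   else (1 - p) / (1 + rB p q) * (rB p q / (1 + rB p q)) ^+ k).

From HB Require Import structures.
From mathcomp Require Import all_boot all_order all_algebra.
From mathcomp Require Import reals ring lra zify.
Set Implicit Arguments. Unset Strict Implicit. Unset Printing Implicit Defensive.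
Import Order.TTheory GRing.Theory Num.Theory.
Local Open Scope ring_scope.

(* For a type tau let N_tau be the number of vertices of type tau and
     dev_{tau,d} = #{v of type tau with out-degree d} - c_tau(d) N_tau,
   where c_tau(d) = (1 + r_tau)^-1 (r_tau / (1 + r_tau))^d is the type-tau part
   of p_d.  One growth step moves dev_{tau,d} by at most 2, and since type tau
   receives children at rate alpha_tau = r_tau P(type tau), its conditional
   drift is (alpha_tau / N_tau) (dev_{tau,d-1} - dev_{tau,d}).  As
   |dev_{tau,d-1}| <= N_tau, this gives
     E dev_{tau,d}(n+1)^2 <= E dev_{tau,d}(n)^2 + E |dev_{tau,d-1}(n)| + 4,
   so by induction on d (with AM-GM) E dev_{tau,d}^2 = o(n^2).  The excess
   N_A - p n is a martingale with increments bounded by 1, so its second moment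
   is O(n).  Finally
     N_k - p_k n = dev_{A,k} + dev_{B,k} + (c_A(k) - c_B(k)) (N_A - p n),
   hence E (N_k - p_k n)^2 = o(n^2), and Chebyshev's inequality concludes. *)

Section Subquadratic.
Context {R : archiRealFieldType}.
Implicit Types (u v : nat -> R) (e c : R).

(* Sequences are indexed by the number [m] of growth steps: the tree then has
   [m.+2] vertices. *)
Definition subquadratic u :=
  forall e, 0 < e -> exists C, forall m, u m <= e * m.+2%:R ^+ 2 + C * m.+2%:R.

Definition sublinear v :=
  forall e, 0 < e -> exists C, forall m, v m <= e * m.+2%:R + C.

Lemma subquadratic_le u v : (forall m, u m <= v m) -> subquadratic v -> subquadratic u.
Proof.
by move=> uv hv e /hv[C hC]; exists C => m; apply: le_trans (uv m) (hC m).
Qed.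

Lemma subquadraticD u v : subquadratic u -> subquadratic v ->
  subquadratic (fun m => u m + v m).
Proof.
move=> hu hv e e_gt0; have e2_gt0 : 0 < e / 2 by rewrite divr_gt0.
have [Cu hCu] := hu _ e2_gt0; have [Cv hCv] := hv _ e2_gt0.
by exists (Cu + Cv) => m; have := hCu m; have := hCv m; lra.
Qed.

Lemma subquadraticZ c u : 0 < c -> subquadratic u -> subquadratic (fun m => c * u m).
Proof.
move=> c_gt0 hu e e_gt0; have [C hC] := hu _ (divr_gt0 e_gt0 c_gt0).
exists (c * C) => m; set x := m.+2%:R.
have -> : e * x ^+ 2 + c * C * x = c * (e / c * x ^+ 2 + C * x).
  by field; rewrite lt0r_neq0.
by rewrite ler_pM2l.
Qed.

(* Summing increments of size [e m + C] gives [e m^2 / 2 + C m]. *)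
Lemma subquadratic_sum u v c :
  (forall m, u m.+1 <= u m + v m + c) -> sublinear v -> subquadratic u.
Proof.
move=> u_incr hv e e_gt0; have [C hC] := hv _ e_gt0.
exists (`|u 0%N| + `|C + c|); elim=> [|m IH].
  have := ler_norm (u 0%N); have := normr_ge0 (u 0%N); have := normr_ge0 (C + c).
  have := mulr_ge0 (ltW e_gt0) (sqr_ge0 (2%:R : R)); lra.
have := u_incr m; have := hC m; have := ler_norm (C + c); have := normr_ge0 (u 0%N).
rewrite -[m.+3]addn1 natrD; set x := m.+2%:R.
have : 0 <= x by rewrite ler0n.
by move: IH; rewrite -/x; nra.
Qed.

(* The hypothesis is AM-GM [|y| <= y^2 / k + k / 4] taken in expectation;
   choose [k = 2 e (m + 2)]. *)
Lemma sublinear_amgm u v :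
  (forall m k, 0 < k -> v m <= u m / k + k / 4) -> subquadratic u -> sublinear v.
Proof.
move=> amgm hu e e_gt0; have [C hC] := hu _ (exprn_gt0 2 e_gt0).
exists (C / (2 * e)) => m; set x := m.+2%:R.
have x_gt0 : 0 < x by rewrite ltr0n.
have k_gt0 : 0 < 2 * e * x by rewrite !mulr_gt0.
apply: le_trans (amgm m _ k_gt0) _.
have kV_ge0 : 0 <= (2 * e * x)^-1 by rewrite invr_ge0 ltW.
have := ler_wpM2r kV_ge0 (hC m); rewrite -/x; clearbody x.
have -> : (e ^+ 2 * x ^+ 2 + C * x) / (2 * e * x) = e * x / 2 + C / (2 * e).
  by field; rewrite !lt0r_neq0.
lra.
Qed.

Lemma subquadratic_eventually u d : subquadratic u -> 0 < d ->
  exists M, forall m, (M <= m)%N -> u m <= d * m.+2%:R ^+ 2.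
Proof.
move=> hu d_gt0; have [C hC] : exists C, forall m, u m <= d / 2 * m.+2%:R ^+ 2 + C * m.+2%:R.
  by apply: hu; rewrite divr_gt0.
have B_ge0 : 0 <= 2 * `|C| / d by apply: divr_ge0 (ltW d_gt0); exact: mulr_ge0.
exists (Num.Def.archi_bound (2 * `|C| / d)) => m hm; apply: le_trans (hC m) _.
have : 2 * `|C| / d < m.+2%:R.
  apply: lt_le_trans (archi_boundP B_ge0) _; rewrite ler_nat; lia.
rewrite ltr_pdivrMr //; set x := m.+2%:R; have := ler_norm C.
have : 0 <= x by rewrite ler0n.
nra.
Qed.

End Subquadratic.

Section RealInequalities.
Context {R : realFieldType}.
Implicit Types (a b c x y N r eps : R).

Lemma dist_unit_le1 a b : 0 <= a <= 1 -> 0 <= b <= 1 -> `|a - b| <= 1.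
Proof. by move=> /andP[? ?] /andP[? ?]; rewrite ler_norml; apply/andP; split; lra. Qed.

Lemma bool_natr_bounds (b : bool) : 0 <= (b%:R : R) <= 1.
Proof. by case: b; rewrite /= ?lexx ?ler01. Qed.

Lemma normr_le_amgm y k : 0 < k -> `|y| <= y ^+ 2 / k + k / 4.
Proof.
move=> k_gt0; rewrite -real_normK ?num_real //.
have -> : `|y| ^+ 2 / k + k / 4 = `|y| + (`|y| - k / 2) ^+ 2 / k by field; rewrite lt0r_neq0.
by rewrite lerDl divr_ge0 ?sqr_ge0 ?ltW.
Qed.

(* [2 x (y - x) <= y^2 / 2] and [y^2 <= |y| N]. *)
Lemma drift_term_le a N x y : 0 <= a <= 1 -> 0 < N -> `|y| <= N ->
  a / N * (2 * x * (y - x)) <= `|y|.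
Proof.
move=> /andP[a_ge0 a_le1] N_gt0 y_le; rewrite mulrAC ler_pdivrMr //.
have y2 : y ^+ 2 <= `|y| * N by rewrite -real_normK ?num_real // expr2 ler_wpM2l.
have := sqr_ge0 (y - 2 * x); have := normr_ge0 y; nra.
Qed.

Lemma sqr_add3_le a b w g : `|w| <= 1 -> (a + b + w * g) ^+ 2 <= 3 * (a ^+ 2 + b ^+ 2 + g ^+ 2).
Proof.
rewrite ler_norml => /andP[? ?].
have w2 : w ^+ 2 <= 1 by nra.
have wg : (w * g) ^+ 2 <= g ^+ 2 by rewrite exprMn ler_piMl ?sqr_ge0.
by have := sqr_ge0 (a - b); have := sqr_ge0 (a - w * g); have := sqr_ge0 (b - w * g); nra.
Qed.

Lemma chebyshev_indicator a b x eps : 0 < eps -> 0 < x ->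
  ((eps < `|a / x - b|)%R)%:R <= (eps ^+ 2 * x ^+ 2)^-1 * (a - b * x) ^+ 2.
Proof.
move=> eps_gt0 x_gt0; have ex_gt0 : 0 < eps * x by rewrite mulr_gt0.
case: ltP => [|_]; last by rewrite mulr_ge0 ?sqr_ge0 // invr_ge0 ltW // mulr_gt0 ?exprn_gt0.
have -> : a / x - b = (a - b * x) / x by field; rewrite lt0r_neq0.
rewrite normf_div (gtr0_norm x_gt0) ltr_pdivlMr // => /ltW lt.
rewrite mulrC ler_pdivlMr ?mul1r -?exprMn ?exprn_gt0 //.
by rewrite -[X in _ <= X]real_normK ?num_real // lerXn2r // ?nnegrE ?normr_ge0 ?mulr_ge0 ?ltW.
Qed.

Definition geom r (d : nat) : R := (1 + r)^-1 * (r / (1 + r)) ^+ d.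

Lemma geom_bounds r d : 0 <= r -> 0 <= geom r d <= 1.
Proof.
move=> r_ge0; have r1_gt0 : 0 < 1 + r by lra.
have h0 : 0 <= r / (1 + r) <= 1 by rewrite divr_ge0 ?ler_pdivrMr ?mul1r //=; lra.
have h1 : 0 <= (1 + r)^-1 <= 1 by rewrite invr_ge0 invf_le1 //=; lra.
case/andP: h0 => ? ?; case/andP: h1 => ? ?.
by rewrite mulr_ge0 ?exprn_ge0 //= mulr_ile1 ?exprn_ge0 ?exprn_ile1.
Qed.

Definition geom_pred r (d : nat) : R := if d is d'.+1 then geom r d' else 0.

Lemma geom_rec r d : 0 <= r -> (1 + r) * geom r d = (d == 0%N)%:R + r * geom_pred r d.
Proof.
move=> r_ge0; have r1_neq0 : 1 + r != 0 by apply: lt0r_neq0; lra.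
by case: d => [|d]; rewrite /geom_pred /geom ?expr0 ?exprS /=; field.
Qed.

End RealInequalities.

Lemma natr_count (R : pzSemiRingType) (T : Type) (P : pred T) (s : seq T) :
  (count P s)%:R = \sum_(x <- s) (P x)%:R :> R.
Proof. by elim: s => [|x s IH]; rewrite ?big_nil // big_cons /= natrD IH. Qed.

Lemma ntype_rcons s e tau : ntype (rcons s e) tau = (ntype s tau + (e.1 == tau))%N.
Proof. by rewrite /ntype -cats1 count_cat /= addn0. Qed.

Lemma outdeg_rcons s t j v : outdeg (rcons s (t, j)) v = (outdeg s v + (j == v))%N.
Proof. by rewrite /outdeg -cats1 count_cat /= addn0. Qed.

Lemma vtype_rcons s e v : (0 < v <= size s)%N -> vtype (rcons s e) v = vtype s v.
Proof. by move=> hv; rewrite /vtype nth_rcons ifT //; lia. Qed.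

Lemma vtype_rcons_last s e : vtype (rcons s e) (size s).+1 = e.1.
Proof. by rewrite /vtype /= nth_rcons ltnn eqxx. Qed.

Definition wf_tree (s : tree) : bool :=
  [&& (0 < ntype s true)%N, (0 < ntype s false)%N & all (fun e => (e.2 <= size s)%N) s].

Lemma wf_tree_rcons s t j : wf_tree s -> (j <= size s)%N -> wf_tree (rcons s (t, j)).
Proof.
case/and3P => hA hB hpar hj; apply/and3P; split; rewrite ?ntype_rcons ?ltn_addr //.
rewrite all_rcons size_rcons /= (leq_trans hj) //.
by apply: sub_all hpar => e /= /leqW.
Qed.

Lemma outdeg_new s : wf_tree s -> outdeg s (size s).+1 = 0%N.
Proof.
case/and3P => _ _ hpar; apply/eqP; rewrite -leqn0 leqNgt -has_count.
by apply/hasPn => e /(allP hpar) /= he; apply/eqP => he'; rewrite he' ltnn in he.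
Qed.

Section Growth.
Variables (R : realType) (p q : R).
Hypotheses (p_gt0 : 0 < p) (p_le1 : p <= 1) (q_ge0 : 0 <= q) (q_le1 : q <= 1).

Local Notation nt s tau := ((ntype s tau)%:R : R).

Definition type_prob (t : bool) : R := if t then p else 1 - p.

Definition parent_prob (tau t : bool) : R := if tau == t then q else 1 - q.

Definition attach_rate (tau : bool) : R :=
  type_prob true * parent_prob tau true + type_prob false * parent_prob tau false.

Definition type_sum (s : tree) (tau : bool) (F : nat -> R) : R :=
  \sum_(v <- iota 1 (size s)) (vtype s v == tau)%:R * F v.

Definition step_expect (s : tree) (g : tree -> R) : R :=
  \sum_(t <- [:: true; false]) \sum_(j <- iota 1 (size s))
    step_prob p q s t j * g (rcons s (t, j)).

Definition expect (m : nat) (g : tree -> R) : R :=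
  \sum_(x <- cmrt_dist p q m) x.2 * g x.1.

Lemma type_prob_ge0 t : 0 <= type_prob t.
Proof. by rewrite /type_prob; case: t; rewrite ?subr_ge0 // ltW. Qed.

Lemma parent_prob_ge0 tau t : 0 <= parent_prob tau t.
Proof. by rewrite /parent_prob; case: eqP; rewrite ?subr_ge0. Qed.

Lemma step_probE s t j :
  step_prob p q s t j = type_prob t * (parent_prob (vtype s j) t / nt s (vtype s j)).
Proof. by rewrite /step_prob mulrA. Qed.

Lemma step_prob_ge0 s t j : 0 <= step_prob p q s t j.
Proof. by rewrite step_probE mulr_ge0 ?type_prob_ge0 // divr_ge0 ?parent_prob_ge0. Qed.

Lemma type_sum1 s tau : type_sum s tau (fun=> 1) = nt s tau.
Proof.
rewrite /type_sum /ntype natr_count -[in RHS](mkseq_nth (true, 0%N) s) /mkseq.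
rewrite big_map -(addn0 1%N) iotaDl big_map; apply: eq_bigr => i _.
by rewrite mulr1 /vtype add1n.
Qed.

Lemma type_sum_ge0 s tau F : (forall v, 0 <= F v) -> 0 <= type_sum s tau F.
Proof.
by move=> F_ge0; apply: sumr_ge0 => v _; rewrite mulr_ge0 ?F_ge0 ?bool_natr_bounds.
Qed.

Lemma type_sum_le_ntype s tau F : (forall v, F v <= 1) -> type_sum s tau F <= nt s tau.
Proof.
move=> F_le1; rewrite -type_sum1 ler_sum // => v _ /=.
by rewrite ler_wpM2l ?F_le1 ?bool_natr_bounds.
Qed.

Lemma ntype_gt0 s tau : wf_tree s -> 0 < nt s tau.
Proof. by case/and3P => hA hB _; rewrite ltr0n; case: tau. Qed.

Lemma ntypeD s : nt s true + nt s false = (size s)%:R.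
Proof.
rewrite -natrD /ntype -(count_predC (fun e : bool * nat => e.1 == true)).
by congr (_ + _)%:R; apply: eq_count => -[[] ?].
Qed.

Lemma type_sumD s tau F G :
  type_sum s tau (fun v => F v + G v) = type_sum s tau F + type_sum s tau G.
Proof. by rewrite /type_sum -big_split; apply: eq_bigr => v _; rewrite mulrDr. Qed.

Lemma type_sumB s tau F G :
  type_sum s tau (fun v => F v - G v) = type_sum s tau F - type_sum s tau G.
Proof. by rewrite /type_sum -sumrB; apply: eq_bigr => v _; rewrite mulrBr. Qed.

Lemma type_sum_type s tau tau' (F : nat -> R) :
  type_sum s tau' (fun v => (vtype s v == tau)%:R * F v) = (tau' == tau)%:R * type_sum s tau F.
Proof.
rewrite /type_sum mulr_sumr; apply: eq_bigr => v _.
by case: (vtype s v); case: tau; case: tau'; rewrite /= ?(mul0r, mul1r).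
Qed.

Lemma type_sum_delta s tau j (F : nat -> R) : j \in iota 1 (size s) ->
  type_sum s tau (fun v => (j == v)%:R * F v) = (vtype s j == tau)%:R * F j.
Proof.
move=> hj; rewrite /type_sum (bigD1_seq j) ?iota_uniq //= eqxx mul1r big1 ?addr0 //.
by move=> v /negbTE; rewrite eq_sym => ->; rewrite mul0r mulr0.
Qed.

Lemma type_sum_rcons s e tau F :
  type_sum (rcons s e) tau F = type_sum s tau F + (e.1 == tau)%:R * F (size s).+1.
Proof.
rewrite /type_sum size_rcons -[(size s).+1]addn1 iotaD big_cat big_seq1 add1n vtype_rcons_last.
rewrite addn1; congr (_ + _); apply: eq_big_seq => v; rewrite mem_iota => hv.
by rewrite vtype_rcons //; lia.
Qed.

Lemma eq_type_sum s tau (F G : nat -> R) :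
  (forall v, F v = G v) -> type_sum s tau F = type_sum s tau G.
Proof. by move=> FG; apply: eq_bigr => v _; rewrite FG. Qed.

Lemma ntype_rconsR s t j tau : nt (rcons s (t, j)) tau = nt s tau + (t == tau)%:R.
Proof. by rewrite ntype_rcons natrD. Qed.

Lemma sum_step_prob s t (F : nat -> R) :
  \sum_(j <- iota 1 (size s)) step_prob p q s t j * F j =
  type_prob t * (parent_prob true t / nt s true * type_sum s true F +
                 parent_prob false t / nt s false * type_sum s false F).
Proof.
rewrite /type_sum !mulr_sumr -big_split mulr_sumr; apply: eq_bigr => j _.
by rewrite step_probE; case: (vtype s j) => /=; ring.
Qed.

Lemma sum_step_prob1 s t : wf_tree s ->
  \sum_(j <- iota 1 (size s)) step_prob p q s t j = type_prob t.
Proof.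
move=> wfs; under eq_bigr do rewrite -[step_prob _ _ _ _ _]mulr1.
rewrite sum_step_prob !type_sum1 !divfK ?gt_eqF ?ntype_gt0 //.
by rewrite /parent_prob; case: t => /=; ring.
Qed.

Lemma step_expect_affine s g A (a : bool -> R) (H : nat -> R) : wf_tree s ->
  (forall t j, j \in iota 1 (size s) -> g (rcons s (t, j)) = A + a t + H j) ->
  step_expect s g = A + (type_prob true * a true + type_prob false * a false) +
    (attach_rate true / nt s true * type_sum s true H +
     attach_rate false / nt s false * type_sum s false H).
Proof.
move=> wfs gE.
have sum_t t : \sum_(j <- iota 1 (size s)) step_prob p q s t j * g (rcons s (t, j)) =
    type_prob t * (A + a t) + \sum_(j <- iota 1 (size s)) step_prob p q s t j * H j.
  rewrite -(sum_step_prob1 t wfs) mulr_suml -big_split /= !big_seq.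
  by apply: eq_bigr => j hj; rewrite gE // mulrDr.
rewrite /step_expect !big_cons big_nil addr0 !sum_t !sum_step_prob /attach_rate.
rewrite /parent_prob /=; ring.
Qed.

Lemma step_expect_const s c : wf_tree s -> step_expect s (fun=> c) = c.
Proof.
move=> wfs; rewrite (@step_expect_affine s _ c (fun=> 0) (fun=> 0)) //.
  by rewrite /type_sum !big1 => *; rewrite ?mulr0; ring.
by move=> *; rewrite !addr0.
Qed.

Lemma step_expectD s f g :
  step_expect s (fun s' => f s' + g s') = step_expect s f + step_expect s g.
Proof.
rewrite /step_expect -big_split; apply: eq_bigr => t _.
by rewrite -big_split; apply: eq_bigr => j _; rewrite mulrDr.
Qed.

Lemma step_expectZ s c f : step_expect s (fun s' => c * f s') = c * step_expect s f.
Proof.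
rewrite /step_expect mulr_sumr; apply: eq_bigr => t _.
by rewrite mulr_sumr; apply: eq_bigr => j _; rewrite mulrCA.
Qed.

Lemma step_expect_le s f g :
  (forall t j, j \in iota 1 (size s) -> f (rcons s (t, j)) <= g (rcons s (t, j))) ->
  step_expect s f <= step_expect s g.
Proof.
move=> fg; apply: ler_sum => t _; rewrite !big_seq; apply: ler_sum => j hj.
by rewrite ler_wpM2l ?step_prob_ge0 ?fg.
Qed.

(* Expanding [g'^2] around [g s] leaves only the square of the increment. *)
Lemma step_expect_sq_le s (g : tree -> R) (B : R) : wf_tree s ->
  (forall t j, j \in iota 1 (size s) -> `|g (rcons s (t, j)) - g s| <= B) ->
  step_expect s (fun s' => g s' ^+ 2) <=
    g s ^+ 2 + 2 * g s * (step_expect s g - g s) + B ^+ 2.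
Proof.
move=> wfs g_incr.
apply: (@le_trans _ _ (step_expect s (fun s' => g s ^+ 2 + B ^+ 2 - 2 * g s * g s
                                              + 2 * g s * g s'))).
  apply: step_expect_le => t j /(g_incr t); rewrite ler_norml => /andP[].
  set y' := g _; set y := g s => *; nra.
rewrite step_expectD step_expect_const // step_expectZ; lra.
Qed.

Lemma expect_succ m g : expect m.+1 g = expect m (step_expect^~ g).
Proof.
rewrite /expect /= big_flatten big_map; apply: eq_bigr => x _.
rewrite !big_cat !big_map big_nil /step_expect !big_cons big_nil !addr0 mulrDr !mulr_sumr.
by congr (_ + _); rewrite ?[in LHS]Monoid.mulm1; apply: eq_big_seq => j _; rewrite /= mulrA.
Qed.

Lemma cmrt_dist_support m x : x \in cmrt_dist p q m ->
  [/\ 0 <= x.2, wf_tree x.1 & size x.1 = m.+2].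
Proof.
elim: m x => [|m IH] x /=; first by rewrite inE => /eqP -> /=; split; rewrite ?ler01.
case/flattenP => _ /mapP[y /IH[y2_ge0 wfy sizey] ->].
rewrite !mem_cat in_nil orbF => /orP[] /mapP[j + ->] /=;
  rewrite mem_iota => /andP[_ hj]; rewrite size_rcons sizey.
all: by split; [rewrite mulr_ge0 ?step_prob_ge0 | rewrite wf_tree_rcons //; lia |].
Qed.

Lemma expect_le m f g : (forall s, wf_tree s -> size s = m.+2 -> f s <= g s) ->
  expect m f <= expect m g.
Proof.
move=> fg; rewrite /expect !big_seq; apply: ler_sum => x /cmrt_dist_support[x2_ge0 wfx sizex].
by rewrite ler_wpM2l ?fg.
Qed.

Lemma eq_expect m f g : (forall s, wf_tree s -> size s = m.+2 -> f s = g s) ->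
  expect m f = expect m g.
Proof. by move=> fg; apply/le_anti; rewrite !expect_le // => s ? ?; rewrite fg. Qed.

Lemma expectD m f g : expect m (fun s => f s + g s) = expect m f + expect m g.
Proof. by rewrite /expect -big_split; apply: eq_bigr => x _; rewrite mulrDr. Qed.

Lemma expectZ m c f : expect m (fun s => c * f s) = c * expect m f.
Proof. by rewrite /expect mulr_sumr; apply: eq_bigr => x _; rewrite mulrCA. Qed.

Lemma expect_const m c : expect m (fun=> c) = c.
Proof.
elim: m => [|m IH]; first by rewrite /expect /= big_seq1 mul1r.
by rewrite expect_succ -[RHS]IH; apply: eq_expect => s wfs _; rewrite step_expect_const.
Qed.

Definition rate (tau : bool) : R := if tau then rA p q else rB p q.

Definition ndeg (s : tree) (tau : bool) (d : nat) : R :=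
  type_sum s tau (fun v => (outdeg s v == d)%:R).

Definition dev (s : tree) (tau : bool) (d : nat) : R :=
  ndeg s tau d - geom (rate tau) d * nt s tau.

Definition dev_pred (s : tree) (tau : bool) (d : nat) : R :=
  if d is d'.+1 then dev s tau d' else 0.

Lemma rate_ge0 tau : 0 <= rate tau.
Proof.
have [p_ge0 q1_ge0 p1_ge0] : [/\ 0 <= p, 0 <= 1 - q & 0 <= 1 - p].
  by split; rewrite ?subr_ge0 // ltW.
by case: tau; rewrite /rate /rA /rB ?addr_ge0 ?divr_ge0 ?mulr_ge0.
Qed.

Lemma attach_rateE tau : type_prob tau != 0 -> attach_rate tau = rate tau * type_prob tau.
Proof. by case: tau => pi_neq0; rewrite /attach_rate /rate /rA /rB /parent_prob /=; field. Qed.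

Lemma attach_rate_bounds tau : 0 <= attach_rate tau <= 1.
Proof.
have w_le1 t : parent_prob tau t <= 1.
  by rewrite /parent_prob; case: eqP; rewrite // lerBlDr lerDl.
rewrite /attach_rate addr_ge0 ?mulr_ge0 ?type_prob_ge0 ?parent_prob_ge0 //=.
have p1_ge0 : 0 <= 1 - p by rewrite subr_ge0.
apply: le_trans (lerD (ler_piMr (ltW p_gt0) (w_le1 true)) (ler_piMr p1_ge0 (w_le1 false))) _.
by rewrite addrC subrK.
Qed.

Lemma ndeg_rcons s t j tau d : wf_tree s -> j \in iota 1 (size s) ->
  ndeg (rcons s (t, j)) tau d = ndeg s tau d + ((t == tau) && (d == 0%N))%:R +
    (vtype s j == tau)%:R * (((outdeg s j).+1 == d)%:R - (outdeg s j == d)%:R).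
Proof.
move=> wfs hj; rewrite /ndeg type_sum_rcons outdeg_rcons outdeg_new //.
have -> : (j == (size s).+1) = false by apply/eqP => hj'; move: hj; rewrite hj' mem_iota; lia.
rewrite (@eq_type_sum _ _ _ (fun v => (outdeg s v == d)%:R +
  (j == v)%:R * (((outdeg s v).+1 == d)%:R - (outdeg s v == d)%:R))).
  rewrite type_sumD type_sum_delta //= add0n [0%N == d]eq_sym.
  by case: (t == tau); rewrite /= ?mul0r ?mul1r; ring.
by move=> v; rewrite outdeg_rcons; case: (j == v); rewrite /= ?addn0 ?addn1; ring.
Qed.

Lemma dev_rcons s t j tau d : wf_tree s -> j \in iota 1 (size s) ->
  dev (rcons s (t, j)) tau d = dev s tau d +
    (((t == tau) && (d == 0%N))%:R - geom (rate tau) d * (t == tau)%:R) +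
    (vtype s j == tau)%:R * (((outdeg s j).+1 == d)%:R - (outdeg s j == d)%:R).
Proof. by move=> wfs hj; rewrite /dev ndeg_rcons // ntype_rconsR; ring. Qed.

Lemma dev_incr_le s t j tau d : wf_tree s -> j \in iota 1 (size s) ->
  `|dev (rcons s (t, j)) tau d - dev s tau d| <= 2.
Proof.
move=> wfs hj; rewrite dev_rcons // -[dev s tau d + _ + _]addrA addrC addrK.
have new_le1 :
    `|((t == tau) && (d == 0%N))%:R - geom (rate tau) d * (t == tau)%:R| <= 1.
  case: (t == tau); rewrite /= ?mulr1 ?mulr0 ?subrr ?normr0 ?ler01 //.
  by rewrite dist_unit_le1 ?bool_natr_bounds ?geom_bounds ?rate_ge0.
have parent_le1 : `|((vtype s j == tau)%:R : R) *
    (((outdeg s j).+1 == d)%:R - (outdeg s j == d)%:R)| <= 1.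
  rewrite normrM mulr_ile1 ?normr_ge0 ?dist_unit_le1 ?bool_natr_bounds //.
  by rewrite ger0_norm ?ler0n ?lern1 ?leq_b1.
exact: le_trans (ler_normD _ _) (lerD new_le1 parent_le1).
Qed.

Lemma norm_dev_le s tau d : `|dev s tau d| <= nt s tau.
Proof.
have [X_ge0 X_le] : 0 <= ndeg s tau d /\ ndeg s tau d <= nt s tau.
  split; [apply: type_sum_ge0 | apply: type_sum_le_ntype] => v.
  - exact: ler0n.
  - by rewrite lern1 leq_b1.
case/andP: (geom_bounds d (rate_ge0 tau)) => c_ge0 c_le1.
have N_ge0 : 0 <= nt s tau := ler0n _ _.
by rewrite /dev ler_norml; apply/andP; split; nra.
Qed.

Lemma norm_dev_pred_le s tau d : `|dev_pred s tau d| <= nt s tau.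
Proof. by case: d => [|d]; rewrite /= ?normr0 ?norm_dev_le. Qed.

Lemma dev_predE s tau d : dev_pred s tau d =
  type_sum s tau (fun v => ((outdeg s v).+1 == d)%:R) - geom_pred (rate tau) d * nt s tau.
Proof.
by case: d => [|d] //=; rewrite /type_sum big1 ?mul0r ?subr0 // => v _; rewrite mulr0.
Qed.

(* The terms not proportional to [dev] cancel by [geom_rec]: this is what
   singles out [geom (rate tau)] as the limit law. *)
Lemma step_expect_dev s tau d : wf_tree s -> type_prob tau != 0 ->
  step_expect s (fun s' => dev s' tau d) =
    dev s tau d + attach_rate tau / nt s tau * (dev_pred s tau d - dev s tau d).
Proof.
move=> wfs pi_neq0.
rewrite (@step_expect_affine s _ (dev s tau d)
  (fun t => ((t == tau) && (d == 0%N))%:R - geom (rate tau) d * (t == tau)%:R)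
  (fun v => (vtype s v == tau)%:R * (((outdeg s v).+1 == d)%:R - (outdeg s v == d)%:R))) //;
  last by move=> t j; apply: dev_rcons.
rewrite !type_sum_type type_sumB -/(ndeg s tau d).
have types_sum (c : R) :
    type_prob true * (((true == tau) && (d == 0%N))%:R - c * (true == tau)%:R) +
    type_prob false * (((false == tau) && (d == 0%N))%:R - c * (false == tau)%:R) =
    type_prob tau * ((d == 0%N)%:R - c).
  by case: tau pi_neq0 => /= _; ring.
rewrite {}types_sum.
have rates_sum (Y : R) : attach_rate true / nt s true * ((true == tau)%:R * Y) +
    attach_rate false / nt s false * ((false == tau)%:R * Y) = attach_rate tau / nt s tau * Y.
  by case: tau pi_neq0 => /= _; ring.
rewrite {}rates_sum.
have d0E : (d == 0%N)%:R =
    (1 + rate tau) * geom (rate tau) d - rate tau * geom_pred (rate tau) d.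
  by rewrite geom_rec ?rate_ge0 // addrK.
have N_neq0 : nt s tau != 0 := lt0r_neq0 (ntype_gt0 tau wfs).
by rewrite dev_predE /dev attach_rateE // d0E; field.
Qed.

Lemma step_expect_dev_sq s tau d : wf_tree s -> type_prob tau != 0 ->
  step_expect s (fun s' => dev s' tau d ^+ 2) <= dev s tau d ^+ 2 + `|dev_pred s tau d| + 4.
Proof.
move=> wfs pi_neq0.
apply: le_trans (step_expect_sq_le wfs _) _ => [t j|]; first exact: dev_incr_le.
have := drift_term_le (dev s tau d) (attach_rate_bounds tau) (ntype_gt0 tau wfs)
  (norm_dev_pred_le s tau d).
rewrite step_expect_dev //; lra.
Qed.

Lemma expect_dev_sq_succ m tau d : type_prob tau != 0 ->
  expect m.+1 (fun s => dev s tau d ^+ 2) <=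
    expect m (fun s => dev s tau d ^+ 2) + expect m (fun s => `|dev_pred s tau d|) + 4.
Proof.
move=> pi_neq0; rewrite expect_succ -(expect_const m 4) -!expectD.
by apply: expect_le => s wfs _; apply: step_expect_dev_sq.
Qed.

Lemma dev_sq_subquadratic tau d : type_prob tau != 0 ->
  subquadratic (fun m => expect m (fun s => dev s tau d ^+ 2)).
Proof.
move=> pi_neq0; elim: d => [|d IH];
  apply: (subquadratic_sum (c := 4) (fun m => expect_dev_sq_succ m _ pi_neq0)).
  move=> e e_gt0; exists 0 => m.
  by rewrite /dev_pred /= normr0 expect_const addr0 mulr_ge0 ?ltW.
apply: sublinear_amgm IH => m k k_gt0.
rewrite -(expect_const m (k / 4)) -mulrC -expectZ -expectD.
by apply: expect_le => s _ _; rewrite mulrC normr_le_amgm.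
Qed.

Definition excess (s : tree) : R := nt s true - p * (size s)%:R.

Lemma excess_rcons s t j : excess (rcons s (t, j)) = excess s + (t%:R - p).
Proof. by rewrite /excess ntype_rconsR size_rcons eqb_id mulrSr; ring. Qed.

Lemma step_expect_excess s : wf_tree s -> step_expect s excess = excess s.
Proof.
move=> wfs; rewrite (@step_expect_affine s _ (excess s) (fun t => t%:R - p) (fun=> 0)) //.
  by rewrite /type_sum !big1 => *; rewrite ?mulr0 //=; ring.
by move=> t j _; rewrite excess_rcons addr0.
Qed.

Lemma expect_excess_sq_succ m :
  expect m.+1 (fun s => excess s ^+ 2) <= expect m (fun s => excess s ^+ 2) + 1.
Proof.
rewrite expect_succ -(expect_const m 1) -expectD; apply: expect_le => s wfs _.
apply: le_trans (step_expect_sq_le (B := 1) wfs _) _ => [t j _|].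
  by rewrite excess_rcons addrC addKr dist_unit_le1 ?bool_natr_bounds // (ltW p_gt0) p_le1.
by rewrite step_expect_excess // subrr mulr0 addr0 expr1n.
Qed.

Lemma excess_sq_subquadratic : subquadratic (fun m => expect m (fun s => excess s ^+ 2)).
Proof.
apply: (subquadratic_sum (v := fun=> 0) (c := 1)) => [m|e e_gt0].
  by rewrite addr0 expect_excess_sq_succ.
by exists 0 => m; rewrite addr0 mulr_ge0 ?ltW.
Qed.

(* For [p = 1] no vertex of type B is ever added, and [excess = - nt false]. *)
Lemma devB_sq_subquadratic d : subquadratic (fun m => expect m (fun s => dev s false d ^+ 2)).
Proof.
have [p1|p_neq1] := eqVneq p 1; last by apply: dev_sq_subquadratic; rewrite subr_eq0 eq_sym.
apply: subquadratic_le excess_sq_subquadratic => m; apply: expect_le => s _ _.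
have -> : excess s = - nt s false by rewrite /excess p1 mul1r -ntypeD; ring.
by rewrite sqrrN -real_normK ?num_real // lerXn2r ?nnegrE ?norm_dev_le.
Qed.

Lemma Nk_ndeg k s : (Nk k s)%:R = ndeg s true k + ndeg s false k.
Proof.
rewrite /Nk natr_count /ndeg /type_sum -big_split; apply: eq_bigr => v _.
by case: (vtype s v); rewrite /= ?mul1r ?mul0r ?addr0 ?add0r.
Qed.

Lemma pk_geom k : pk p q k = p * geom (rate true) k + (1 - p) * geom (rate false) k.
Proof.
rewrite /pk /geom /rate !mulrA; case: eqP => [->|_] //.
by rewrite subrr !mul0r addr0.
Qed.

Lemma Nk_dev k s : (Nk k s)%:R - pk p q k * (size s)%:R =
  dev s true k + dev s false k + (geom (rate true) k - geom (rate false) k) * excess s.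
Proof. by rewrite Nk_ndeg pk_geom /dev /excess -ntypeD; ring. Qed.

Lemma Nk_dev_sq_subquadratic k :
  subquadratic (fun m => expect m (fun s => ((Nk k s)%:R - pk p q k * m.+2%:R) ^+ 2)).
Proof.
have pA_neq0 : type_prob true != 0 by rewrite lt0r_neq0.
have three_gt0 : 0 < 3 :> R by [].
apply: subquadratic_le (subquadraticZ three_gt0 (subquadraticD (subquadraticD
  (dev_sq_subquadratic k pA_neq0) (devB_sq_subquadratic k)) excess_sq_subquadratic)) => m.
rewrite -!expectD -expectZ; apply: expect_le => s _ <-; rewrite Nk_dev sqr_add3_le //.
by rewrite dist_unit_le1 ?geom_bounds ?rate_ge0.
Qed.

Lemma probT_expect n (E : tree -> bool) :
  probT p q n.+2 E = expect n (fun s => (E s)%:R).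
Proof. by rewrite /probT !subSS subn0. Qed.

End Growth.

Theorem theorem3p1 (R : realType) (p q : R) (k : nat) :
  0 < p -> p <= 1 -> 0 <= q -> q <= 1 ->
  forall eps : R, 0 < eps ->
  forall delta : R, 0 < delta ->
  exists N : nat, forall n : nat, (N <= n)%N ->
    probT p q n (fun s => eps < `|(Nk k s)%:R / n%:R - pk p q k|) <= delta.
Proof.
move=> p_gt0 p_le1 q_ge0 q_le1 eps eps_gt0 delta delta_gt0.
have [M Nk_dev_small] := subquadratic_eventually
  (Nk_dev_sq_subquadratic p_gt0 p_le1 q_ge0 q_le1 k) (mulr_gt0 delta_gt0 (exprn_gt0 2 eps_gt0)).
exists M.+2 => -[|[|m]] // /ltnSE/ltnSE/Nk_dev_small Nk_dev_le; rewrite probT_expect.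
have n_gt0 : 0 < m.+2%:R :> R by rewrite ltr0n.
apply: le_trans (expect_le p_gt0 p_le1 q_ge0 q_le1
  (fun s _ _ => chebyshev_indicator (Nk k s)%:R (pk p q k) eps_gt0 n_gt0)) _.
by rewrite expectZ ler_pdivrMl ?mulr_gt0 ?exprn_gt0 // [_ * delta]mulrC mulrA.
Qed.
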